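(* Let $p>2$ be an even integer such that $p/2$ is odd. Then there exists a subset $\mathcal{X}$ of $\mathbb{P}^2_\circ$ with $|\mathcal{X}|=|B(2,p)\cap\mathbb{P}^2_\circ|-1$ and $$\kappa(\mathcal{X})\le\kappa(B(2,p)\cap\mathbb{P}^2_\circ)-\frac{p}{2}+1.$$ Moreover, every subset $\mathcal{X}$ of $\mathbb{P}^2_\circ$ with these two properties satisfies at least one of: (i) some point of $B(2,p-1)\cap\mathbb{P}^2_\circ$ is not in $\mathcal{X}$; (ii) some point of $\mathcal{X}$ is not in $B(2,p)\cap\mathbb{P}^2_\circ$.
   Context: A point of $\mathbb{Z}^2$ is primitive if its coordinates are relatively prime; $\mathbb{P}^2_\circ$ denotes the set of primitive points of $\mathbb{Z}^2$ whose first non-zero coordinate is positive. $B(2,p)=\{x\in\mathbb{R}^2:\|x\|_1\le p\}$. For a finite $\mathcal{X}\subset\mathbb{R}^2$, $\kappa(\mathcal{X})=\max_{i\in\{1,2\}}\sum_{x\in\mathcal{X}}|x_i|$. *)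

From mathcomp Require Import all_boot all_order all_algebra.
Set Implicit Arguments. Unset Strict Implicit. Unset Printing Implicit Defensive.
Import Order.TTheory GRing.Theory Num.Theory.
Local Open Scope ring_scope.

Definition pt := (int * int)%type.

Definition primitive (x : pt) : bool := (gcdz x.1 x.2 == 1)%N.

Definition firstpos (x : pt) : bool := (0 < x.1) || ((x.1 == 0) && (0 < x.2)).

Definition inP2o (x : pt) : bool := primitive x && firstpos x.

Definition l1 (x : pt) : nat := (`|x.1| + `|x.2|)%N.

Definition inB (p : nat) (x : pt) : bool := (l1 x <= p)%N.

(* kappa of a finite set, represented as a duplicate-free list *)
Definition kappa (X : seq pt) : nat :=
  maxn (\sum_(x <- X) `|x.1|)%N (\sum_(x <- X) `|x.2|)%N.

Definition rng (p : nat) : seq int := [seq (i%:Z - p%:Z) | i <- iota 0 (p.*2.+1)].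
Definition BP (p : nat) : seq pt :=
  [seq x <- [seq (a, b) | a <- rng p, b <- rng p] | inP2o x && inB p x].

From mathcomp Require Import all_boot all_order all_algebra zify.
Set Implicit Arguments. Unset Strict Implicit. Unset Printing Implicit Defensive.
Import Order.TTheory GRing.Theory Num.Theory.
Local Open Scope ring_scope.

(** Write p = 2m.  The transposition (a, b) |-> (b, a), renormalised by a sign,
    permutes B(2,p) ∩ P^2_circ, so both coordinate sums of that set equal
    kappa =: K.  Replacing (m-2, m+2) and (m+2, m-2) by the primitive point
    (m+1, m), which lies just outside the ball, gives a set with kappa
    K - m + 1.  Conversely, a set of the right size inside the ball that
    contains all of B(2,p-1) misses exactly one point y with |y|_1 = 2m, and
    then its kappa is K - min(|y_1|, |y_2|).  Since m is odd and y is
    primitive, y is none of (m, m), (m-1, m+1), (m+1, m-1), so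
    min(|y_1|, |y_2|) <= m - 2 and kappa exceeds the bound. *)

Section PermEq.
Variable T : eqType.

Lemma perm_map_involutive (f : T -> T) (s : seq T) :
  uniq s -> {in s, forall x, f x \in s} -> {in s, involutive f} ->
  perm_eq (map f s) s.
Proof.
move=> s_uniq fs fK; apply: uniq_perm => //.
  by rewrite map_inj_in_uniq //; apply: can_in_inj fK.
move=> x; apply/mapP/idP => [[y sy ->]|sx]; first exact: fs.
by exists (f x); rewrite ?fs ?fK.
Qed.

Lemma perm_rem_of_size_pred (s X : seq T) :
  uniq s -> uniq X -> {subset X <= s} -> size X = (size s).-1 -> s != [::] ->
  exists y, [/\ y \in s, y \notin X & perm_eq X (rem y s)].
Proof.
move=> s_uniq X_uniq Xs X_size s_nil.
have /hasP[y sy yX] : has (fun y => y \notin X) s.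
  apply: contraTT s_nil => /hasPn sX.
  have := uniq_leq_size s_uniq (fun x sx => negbNE (sX x sx)).
  by rewrite X_size -size_eq0 negbK; lia.
have X_rem : {subset X <= rem y s}.
  move=> x Xx; rewrite (mem_rem_uniq _ s_uniq) inE Xs // andbT.
  by apply: contraNneq yX => <-.
have rem_size : (size (rem y s) <= size X)%N by rewrite size_rem // X_size.
have [_ X_eq] := uniq_min_size X_uniq X_rem rem_size.
by exists y; split; rewrite // uniq_perm ?rem_uniq.
Qed.

End PermEq.

Lemma coprime_addn4 n : coprime n (n + 4) = odd n.
Proof. by rewrite /coprime gcdnDl -[4%N]/(2 ^ 2)%N -/(coprime n _) coprime_pexpr ?coprimen2. Qed.

Lemma coprime_double_odd_minn a b m :
  odd m -> (1 < m)%N -> (a + b = m.*2)%N -> coprime a b -> ((minn a b).+2 <= m)%N.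
Proof.
move=> m_odd m_gt1 ab_sum ab_coprime; rewrite leqNgt; apply/negP => near_half.
have [[a_m b_m]|[a_even b_even]] : (a = m /\ b = m) \/ (2 %| a /\ 2 %| b)%N by lia.
  by move: ab_coprime; rewrite /coprime a_m b_m gcdnn; lia.
have : (2 %| gcdn a b)%N by rewrite dvdn_gcd a_even b_even.
by rewrite (eqP ab_coprime).
Qed.

Lemma primitiveE x : primitive x = coprime `|x.1| `|x.2|.
Proof. by []. Qed.

Lemma mem_rng p (a : int) : (`|a| <= p)%N -> a \in rng p.
Proof.
move=> a_le; apply/mapP; exists (absz (a + p%:Z)); last by lia.
by rewrite mem_iota; lia.
Qed.

Lemma mem_BP p x : (x \in BP p) = inP2o x && inB p x.
Proof.
rewrite mem_filter andb_idr // => /andP[_]; case: x => a b ab_le.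
by apply: allpairs_f; apply: mem_rng; rewrite /inB /l1 /= in ab_le; lia.
Qed.

Lemma BP_uniq p : uniq (BP p).
Proof.
have rng_uniq : uniq (rng p) by rewrite map_inj_uniq ?iota_uniq // => i j /=; lia.
by apply/filter_uniq/allpairs_uniq => // -[a b] [c d].
Qed.

Lemma BP_neq0 p : (0 < p)%N -> BP p != [::].
Proof.
move=> p_gt0; have : ((1%:Z, 0%:Z) : pt) \in BP p by rewrite mem_BP.
by case: (BP p).
Qed.

Definition pt_swap (x : pt) : pt :=
  if firstpos (x.2, x.1) then (x.2, x.1) else (- x.2, - x.1).

Lemma inP2o_swap x : inP2o x -> inP2o (pt_swap x).
Proof.
case: x => a b; rewrite /inP2o /pt_swap /primitive /firstpos /= => /andP[ab_gcd ab_first].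
by case: ifP => /= ba_first; rewrite ?gcdNz ?gcdzN gcdzC ab_gcd //=; lia.
Qed.

Lemma l1_swap x : l1 (pt_swap x) = l1 x.
Proof. by case: x => a b; rewrite /pt_swap /l1; case: ifP => _ /=; lia. Qed.

Lemma abs_swap1 x : `|(pt_swap x).1|%N = `|x.2|%N.
Proof. by case: x => a b; rewrite /pt_swap; case: ifP => _ /=; lia. Qed.

Lemma pt_swapK x : firstpos x -> pt_swap (pt_swap x) = x.
Proof.
case: x => a b; rewrite /pt_swap /firstpos /= => ab_first.
case ba_first: ((0 < b) || (b == 0) && (0 < a)) => /=; first by rewrite ab_first.
by rewrite !opprK; case: ifP => // ab_neg; move: ab_neg ab_first ba_first; lia.
Qed.

Lemma perm_BP_swap p : perm_eq (map pt_swap (BP p)) (BP p).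
Proof.
apply: perm_map_involutive (BP_uniq p) _ _ => x; rewrite mem_BP => /andP[x_P2o x_B].
  by rewrite mem_BP inP2o_swap //= /inB l1_swap.
by apply: pt_swapK; case/andP: x_P2o.
Qed.

Lemma sum_abs2_BP p :
  (\sum_(x <- BP p) `|x.2| = \sum_(x <- BP p) `|x.1|)%N.
Proof.
rewrite -[in RHS](perm_big _ (perm_BP_swap p)) big_map.
by apply: eq_bigr => x _; rewrite abs_swap1.
Qed.

Lemma kappa_BP p : kappa (BP p) = (\sum_(x <- BP p) `|x.1|)%N.
Proof. by rewrite /kappa sum_abs2_BP maxnn. Qed.

Lemma perm_kappa X Y : perm_eq X Y -> kappa X = kappa Y.
Proof. by move=> XY; rewrite /kappa !(perm_big _ XY). Qed.

Lemma kappa_rem_BP p (y : pt) :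
  y \in BP p -> (kappa (rem y (BP p)) + minn `|y.1| `|y.2| = kappa (BP p))%N.
Proof.
move=> yB; rewrite kappa_BP.
have := sum_abs2_BP p; rewrite /kappa !(big_rem _ yB) /=.
set S1 := (\sum_(x <- rem y _) `|x.1|)%N; set S2 := (\sum_(x <- rem y _) `|x.2|)%N.
by lia.
Qed.

Lemma exchange_BP_double m : odd m -> (1 < m)%N ->
  exists X, [/\ uniq X, all inP2o X, size X = (size (BP m.*2)).-1
              & (kappa X + m = kappa (BP m.*2) + 1)%N].
Proof.
move=> m_odd m_gt1.
pose u : pt := (Posz (m - 2), Posz (m + 2)).
pose v : pt := (Posz (m + 2), Posz (m - 2)).
pose w : pt := (Posz m.+1, Posz m).
have uv_coprime : coprime (m - 2) (m + 2).
  have -> : (m + 2 = m - 2 + 4)%N by lia.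
  by rewrite coprime_addn4; lia.
have uB : u \in BP m.*2.
  by rewrite mem_BP /inP2o primitiveE /= uv_coprime /firstpos /inB /l1 /=; lia.
have vB : v \in rem u (BP m.*2).
  rewrite (mem_rem_uniq _ (BP_uniq _)) inE mem_BP /inP2o primitiveE /= coprime_sym uv_coprime.
  by rewrite /v /u xpair_eqE /firstpos /inB /l1 /=; lia.
have w_P2o : inP2o w by rewrite /inP2o primitiveE coprimeSn /firstpos /=; lia.
have wB : w \notin BP m.*2 by rewrite mem_BP /inB /l1 /=; lia.
exists (w :: rem v (rem u (BP m.*2))); split.
- rewrite /= !rem_uniq ?BP_uniq // andbT.
  by apply: contra wB => /mem_rem /mem_rem.
- rewrite /= w_P2o; apply/allP => x /mem_rem /mem_rem.
  by rewrite mem_BP => /andP[].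
- have : (0 < size (rem u (BP m.*2)))%N by case: (rem u _) vB.
  by rewrite /= (size_rem vB) (size_rem uB) => /prednK.
- have := sum_abs2_BP m.*2.
  rewrite kappa_BP /kappa !big_cons !(big_rem _ uB) !(big_rem _ vB) /=.
  set S1 := (\sum_(x <- rem v _) `|x.1|)%N; set S2 := (\sum_(x <- rem v _) `|x.2|)%N.
  by lia.
Qed.

Lemma leq_kappa_rem_BP_double m (y : pt) : odd m -> (1 < m)%N ->
  y \in BP m.*2 -> ~~ inB m.*2.-1 y ->
  (kappa (BP m.*2) + 2 <= kappa (rem y (BP m.*2)) + m)%N.
Proof.
move=> m_odd m_gt1 yB y_far; rewrite -(kappa_rem_BP yB).
move: yB; rewrite mem_BP /inP2o primitiveE => /andP[/andP[y_coprime _] y_near].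
have y_l1 : (`|y.1| + `|y.2| = m.*2)%N.
  by move: y_near y_far; rewrite /inB /l1; lia.
by have := coprime_double_odd_minn m_odd m_gt1 y_l1 y_coprime; lia.
Qed.

Theorem proposition5p3 (p : nat) :
  (2 < p)%N -> ~~ odd p -> odd p./2 ->
  (exists X : seq pt,
      [/\ uniq X, all inP2o X, size X = (size (BP p)).-1
        & (kappa X)%:Z <= (kappa (BP p))%:Z - (p./2)%:Z + 1])
  /\
  (forall X : seq pt,
      uniq X -> all inP2o X -> size X = (size (BP p)).-1 ->
      (kappa X)%:Z <= (kappa (BP p))%:Z - (p./2)%:Z + 1 ->
      (exists x : pt, [/\ inP2o x, inB p.-1 x & x \notin X])
      \/ (exists2 x : pt, x \in X & ~~ (inP2o x && inB p x))).
Proof.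
move=> p_gt2 p_even; have [m p_eq] : exists m, p = m.*2.
  by exists p./2; rewrite -[LHS]odd_double_half (negbTE p_even).
subst p; rewrite doubleK => m_odd; have m_gt1 : (1 < m)%N by lia.
split.
  have [X [X_uniq X_P2o X_size X_kappa]] := exchange_BP_double m_odd m_gt1.
  by exists X; split => //; lia.
move=> X X_uniq _ X_size X_kappa.
have [X_in | /allPn[x Xx x_out]] := boolP (all (fun x => inP2o x && inB m.*2 x) X);
  last by right; exists x.
have X_BP : {subset X <= BP m.*2} by move=> x Xx; rewrite mem_BP (allP X_in).
have [y [yB yX X_perm]] :=
  perm_rem_of_size_pred (BP_uniq _) X_uniq X_BP X_size (BP_neq0 (ltnW (ltnW p_gt2))).
have [y_near | y_far] := boolP (inB m.*2.-1 y).
  by left; exists y; split => //; move: yB; rewrite mem_BP => /andP[].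
have := leq_kappa_rem_BP_double m_odd m_gt1 yB y_far.
by rewrite -(perm_kappa X_perm); lia.
Qed.
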